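(* Consider a discounted Markov decision problem and the inexact policy mirror descent method as described in the context, with $\pi^{(0)}\in\operatorname{rint}\Pi$ and step sizes $\eta_k>0$, and suppose that the inexact $Q$-evaluations satisfy $\|\widehat Q(\pi^{(k)})-Q(\pi^{(k)})\|_\infty\le\tau$ for all $k\ge0$. Then for all $k\ge0$, \[ \bigl\langle\widehat Q_s(\pi^{(k)}),\pi^{(k+1)}_s-\pi^{(k)}_s\bigr\rangle\le0\qquad\forall s\in\mathcal{S}, \] and for any $\rho\in\Delta(\mathcal{S})$, \[ V_\rho(\pi^{(k+1)})-V_\rho(\pi^{(k)})\le\frac{2}{1-\gamma}\tau. \]
   Context: A discounted Markov decision problem (cost-minimization form): finite state set $\mathcal{S}$, finite action set $\mathcal{A}$, transition probabilities $P(s'|s,a)$, cost $R:\mathcal{S}\times\mathcal{A}\to[0,1]$, discount $\gamma\in[0,1)$. Policies $\Pi=\Delta(\mathcal{A})^{|\mathcal{S}|}$; $\operatorname{rint}\Pi$ is the set of policies with all entries $\pi_{s,a}>0$. $V_s(\pi)=\mathbf{E}\bigl[\sum_{t\ge0}\gamma^tR(s_t,a_t)\mid s_0=s\bigr]$ with $a_t\sim\pi_{s_t}$, $s_{t+1}\sim P(\cdot|s_t,a_t)$; $V_\rho(\pi)=\sum_s\rho_sV_s(\pi)$. $Q_{s,a}(\pi)=R_{s,a}+\gamma\sum_{s'}P(s'|s,a)V_{s'}(\pi)$; $Q(\pi)\in\mathbf{R}^{|\mathcal{S}|\times|\mathcal{A}|}$, $Q_s(\pi)\in\mathbf{R}^{|\mathcal{A}|}$.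 Bregman divergence: $h:\mathbf{R}^{|\mathcal{A}|}\to\mathbf{R}\cup\{+\infty\}$ is a convex function of Legendre type (proper, closed, essentially smooth, strictly convex on the relative interior of its domain) with $\Delta(\mathcal{A})\subseteq\operatorname{dom}h$ and $\operatorname{rint}\Delta(\mathcal{A})\subseteq\operatorname{rint}\operatorname{dom}h$; $D(p,p')=h(p)-h(p')-\langle\nabla h(p'),p-p'\rangle$. Inexact policy mirror descent: at each iteration an estimate $\widehat Q(\pi^{(k)})\in\mathbf{R}^{|\mathcal{S}|\times|\mathcal{A}|}$ of $Q(\pi^{(k)})$ is available, and for each $s$, $\pi^{(k+1)}_s=\arg\min_{p\in\Delta(\mathcal{A})}\{\eta_k\langle\widehat Q_s(\pi^{(k)}),p\rangle+D(p,\pi^{(k)}_s)\}$. *)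

From HB Require Import structures.
From mathcomp Require Import all_boot all_order all_algebra.
From mathcomp Require Import all_classical all_reals all_analysis.
Set Implicit Arguments. Unset Strict Implicit. Unset Printing Implicit Defensive.
Import Order.TTheory GRing.Theory Num.Theory.
Import numFieldNormedType.Exports.
Local Open Scope classical_set_scope.
Local Open Scope ring_scope.

Section Defs.
Variable R : realType.

Definition simplex (n : nat) (p : 'rV[R]_n) : Prop :=
  (forall i, 0 <= p 0 i) /\ \sum_i p 0 i = 1.

Definition rint_simplex (n : nat) (p : 'rV[R]_n) : Prop :=
  (forall i, 0 < p 0 i) /\ \sum_i p 0 i = 1.

Definition dotr (n : nat) (q p : 'rV[R]_n) : R := \sum_i q 0 i * p 0 i.

Definition edom (n : nat) (h : 'rV[R]_n -> \bar R) : set 'rV[R]_n :=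
  [set x | (h x < +oo)%E].

Definition hfin (n : nat) (h : 'rV[R]_n -> \bar R) : 'rV[R]_n -> R :=
  fun x => fine (h x).

Definition grad (n : nat) (f : 'rV[R]_n -> R) (x : 'rV[R]_n) : 'rV[R]_n :=
  \row_(i < n) ('d f x (delta_mx 0 i : 'rV[R]_n)).

Definition proper_fun (n : nat) (h : 'rV[R]_n -> \bar R) : Prop :=
  (exists x, (h x < +oo)%E) /\ (forall x, (-oo < h x)%E).

Definition convex_fun (n : nat) (h : 'rV[R]_n -> \bar R) : Prop :=
  forall (x y : 'rV[R]_n) (t : R), 0 <= t <= 1 ->
    let z := t *: x + (1 - t) *: y in
    (h z <= t%:E * h x + (1 - t)%:E * h y)%E.

(** closed = lower semicontinuous = closed epigraph *)
Definition closed_fun (n : nat) (h : 'rV[R]_n -> \bar R) : Prop :=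
  closed [set xy : 'rV[R]_n * R | (h xy.1 <= xy.2%:E)%E].

Definition essentially_smooth (n : nat) (h : 'rV[R]_n -> \bar R) : Prop :=
  let C := edom h in
  (exists x, interior C x) /\
  (forall x, interior C x -> differentiable (hfin h) x) /\
  (forall (u : nat -> 'rV[R]_n) (x : 'rV[R]_n),
      (forall k, interior C (u k)) -> u @ \oo --> x ->
      closure (interior C) x -> ~ interior C x ->
      (fun k => `|grad (hfin h) (u k)|) @ \oo --> +oo).

Definition strictly_convex_on_int (n : nat) (h : 'rV[R]_n -> \bar R) : Prop :=
  forall (x y : 'rV[R]_n) (t : R), interior (edom h) x -> interior (edom h) y ->
    x != y -> 0 < t < 1 ->
    hfin h (t *: x + (1 - t) *: y) < t * hfin h x + (1 - t) * hfin h y.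

Definition legendre (n : nat) (h : 'rV[R]_n -> \bar R) : Prop :=
  [/\ proper_fun h, convex_fun h, closed_fun h, essentially_smooth h
    & strictly_convex_on_int h].

Definition bregman (n : nat) (h : 'rV[R]_n -> \bar R) (p p' : 'rV[R]_n) : R :=
  hfin h p - hfin h p' - 'd (hfin h) p' (p - p').

Definition is_policy (nS nA : nat) (pi : 'M[R]_(nS, nA)) : Prop :=
  forall s, simplex (row s pi).

Definition is_rint_policy (nS nA : nat) (pi : 'M[R]_(nS, nA)) : Prop :=
  forall s, rint_simplex (row s pi).

Definition is_transition (nS nA : nat) (P : 'I_nS -> 'I_nA -> 'I_nS -> R) : Prop :=
  forall s a, (forall s', 0 <= P s a s') /\ \sum_s' P s a s' = 1.

Section MDP.
Variables (nS nA : nat) (P : 'I_nS -> 'I_nA -> 'I_nS -> R)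
          (C : 'I_nS -> 'I_nA -> R) (gamma : R).

Definition Ppi (pi : 'M[R]_(nS, nA)) : 'M[R]_nS :=
  \matrix_(s, s') \sum_a pi s a * P s a s'.

Definition cpi (pi : 'M[R]_(nS, nA)) : 'cV[R]_nS :=
  \col_s \sum_a pi s a * C s a.

(** V_s(pi) = E[ sum_t gamma^t C(s_t,a_t) | s_0 = s ]
            = sum_{t>=0} gamma^t (P_pi^t c_pi)_s   (series) *)
Definition Vs (pi : 'M[R]_(nS, nA)) (s : 'I_nS) : R :=
  limn (fun N => \sum_(0 <= t < N) gamma ^+ t * ((Ppi pi ^+ t) *m cpi pi) s 0).

Definition Vrho (pi : 'M[R]_(nS, nA)) (rho : 'rV[R]_nS) : R :=
  \sum_s rho 0 s * Vs pi s.

Definition Qfun (pi : 'M[R]_(nS, nA)) : 'M[R]_(nS, nA) :=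
  \matrix_(s, a) (C s a + gamma * \sum_s' P s a s' * Vs pi s').

End MDP.
End Defs.

(** The first claim is the optimality of the mirror step tested against the previous
   iterate: D(pi_k, pi_k) = 0 and, h being convex and differentiable at pi_k,
   D(pi_(k+1), pi_k) >= 0, so eta_k <Qhat_k, pi_(k+1) - pi_k> <= 0.  Differentiability
   at pi_k requires every iterate to stay in the interior of dom h, which is where the
   Legendre property enters: if pi_(k+1) were on the boundary, optimality against the
   points of the segment towards the uniform distribution would bound the gradient of
   h along that segment, whereas essential smoothness makes it blow up.

   For the second claim, the error bound turns the first one into
   <pi_(k+1) - pi_k, Q(pi_k)> <= 2 tau at every state.  By the Bellman equations the
   difference d = V(pi_(k+1)) - V(pi_k) satisfies d <= 2 tau + gamma P_(pi_(k+1)) d,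
   and evaluating this at a state where d is maximal gives d <= 2 tau / (1 - gamma),
   which survives averaging over rho. *)

From HB Require Import structures.
From mathcomp Require Import all_boot all_order all_algebra.
From mathcomp Require Import all_classical all_reals all_analysis.
From mathcomp Require Import ring lra.
Import Order.TTheory GRing.Theory Num.Theory.
Import numFieldNormedType.Exports.
Local Open Scope classical_set_scope.
Local Open Scope ring_scope.

Section PolicyEvaluation.
Context { R : realType } { nS nA : nat }
  { P : 'I_nS -> 'I_nA -> 'I_nS -> R } { C : 'I_nS -> 'I_nA -> R } { gamma : R }.
Hypothesis P_transition : is_transition P.
Hypothesis C_01 : forall s a, 0 <= C s a <= 1.
Hypothesis gamma_01 : 0 <= gamma < 1.

Lemma sum_policy_Bellman (pi : 'M[R]_(nS, nA)) (v : 'I_nS -> R) s :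
  \sum_a pi s a * (C s a + gamma * \sum_s' P s a s' * v s') =
  cpi C pi s 0 + gamma * \sum_s' Ppi P pi s s' * v s'.
Proof.
under eq_bigr do rewrite mulrDr.
rewrite big_split /= mxE; congr (_ + _).
have -> : \sum_s' Ppi P pi s s' * v s' = \sum_a pi s a * \sum_s' P s a s' * v s'.
  under eq_bigr do rewrite mxE mulr_suml.
  rewrite exchange_big; apply: eq_bigr => a _ /=; rewrite mulr_sumr.
  by apply: eq_bigr => s' _; rewrite mulrA.
by rewrite mulr_sumr; apply: eq_bigr => a _; rewrite mulrCA.
Qed.

Section Policy.
Context { pi : 'M[R]_(nS, nA) } (pi_policy : is_policy pi).

Lemma policy_ge0 s a : 0 <= pi s a.
Proof. by have [/(_ a)] := pi_policy s; rewrite mxE. Qed.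

Lemma policy_sum1 s : \sum_a pi s a = 1.
Proof. by have [_ <-] := pi_policy s; apply: eq_bigr => a _; rewrite mxE. Qed.

Lemma Ppi_ge0 s s' : 0 <= Ppi P pi s s'.
Proof.
rewrite mxE; apply: sumr_ge0 => a _.
by rewrite mulr_ge0 ?policy_ge0 //; case: (P_transition s a).
Qed.

Lemma Ppi_sum1 s : \sum_s' Ppi P pi s s' = 1.
Proof.
under eq_bigr do rewrite mxE.
rewrite exchange_big /= -(policy_sum1 s); apply: eq_bigr => a _.
by rewrite -mulr_sumr; case: (P_transition s a) => _ ->; rewrite mulr1.
Qed.

Lemma cpi_01 s : 0 <= cpi C pi s 0 <= 1.
Proof.
rewrite mxE; apply/andP; split.
  by apply: sumr_ge0 => a _; rewrite mulr_ge0 ?policy_ge0 //; case/andP: (C_01 s a).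
rewrite -(policy_sum1 s); apply: ler_sum => a _.
by rewrite ler_piMr ?policy_ge0 //; case/andP: (C_01 s a).
Qed.

Definition Vpartial (N : nat) (s : 'I_nS) : R :=
  \sum_(0 <= t < N) gamma ^+ t * ((Ppi P pi ^+ t) *m cpi C pi) s 0.

Lemma Vpartial_rec N s :
  Vpartial N.+1 s = cpi C pi s 0 + gamma * \sum_s' Ppi P pi s s' * Vpartial N s'.
Proof.
rewrite /Vpartial big_nat_recl // expr0 mul1r mul1mx; congr (_ + _).
under eq_bigr do rewrite [X in X *m _]exprS -mulmxA mxE exprS mulr_sumr.
rewrite exchange_big /= mulr_sumr; apply: eq_bigr => s' _.
by rewrite !mulr_sumr; apply: eq_bigr => t _; ring.
Qed.

Lemma Vpartial_bound N s : 0 <= Vpartial N s <= (1 - gamma)^-1.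
Proof.
have [g0 g1] := andP gamma_01.
elim: N s => [|N IH] s; first by rewrite /Vpartial big_geq // lexx invr_ge0 subr_ge0 ltW.
rewrite Vpartial_rec; have [c0 c1] := andP (cpi_01 s); apply/andP; split.
  rewrite addr_ge0 // mulr_ge0 //; apply: sumr_ge0 => s' _.
  by rewrite mulr_ge0 ?Ppi_ge0 //; case/andP: (IH s').
have avg_le : \sum_s' Ppi P pi s s' * Vpartial N s' <= (1 - gamma)^-1.
  apply: (@le_trans _ _ (\sum_s' Ppi P pi s s' * (1 - gamma)^-1)).
    apply: ler_sum => s' _.
    by apply: ler_wpM2l; [exact: Ppi_ge0 | case/andP: (IH s')].
  by rewrite -mulr_suml Ppi_sum1 mul1r.
have -> : (1 - gamma)^-1 = 1 + gamma * (1 - gamma)^-1.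
  by field; rewrite subr_eq0 gt_eqF.
by rewrite lerD // ler_wpM2l.
Qed.

Lemma Vpartial_nondecreasing s : nondecreasing_seq (Vpartial ^~ s).
Proof.
apply/nondecreasing_seqP => N; rewrite /Vpartial big_nat_recr //= lerDl.
have Ppi_pow_c_ge0 t s' : 0 <= ((Ppi P pi ^+ t) *m cpi C pi) s' 0.
  elim: t s' => [|t IH] s'; first by rewrite mul1mx; case/andP: (cpi_01 s').
  by rewrite exprS -mulmxA mxE sumr_ge0 // => s'' _; rewrite mulr_ge0 ?Ppi_ge0.
by rewrite mulr_ge0 ?exprn_ge0 //; case/andP: gamma_01.
Qed.

Lemma Vpartial_cvg s : Vpartial ^~ s @ \oo --> Vs P C gamma pi s.
Proof.
apply: nondecreasing_is_cvgn (Vpartial_nondecreasing s) _.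
by exists (1 - gamma)^-1 => _ [N _ <-]; case/andP: (Vpartial_bound N s).
Qed.

Lemma Vs_Bellman s :
  Vs P C gamma pi s = cpi C pi s 0 + gamma * \sum_s' Ppi P pi s s' * Vs P C gamma pi s'.
Proof.
have shifted := Vpartial_cvg s; rewrite -cvg_shiftS /= in shifted.
apply: (cvg_unique _ shifted) => //=.
under eq_fun do rewrite Vpartial_rec.
apply: cvgD; first exact: cvg_cst.
apply: cvgM; first exact: cvg_cst.
apply: (cvg_big add_continuous) => // s' _.
by apply: cvgM; [exact: cvg_cst | exact: Vpartial_cvg].
Qed.

Lemma Vs_Qfun s : Vs P C gamma pi s = \sum_a pi s a * Qfun P C gamma pi s a.
Proof.
by under eq_bigr do rewrite mxE; rewrite sum_policy_Bellman -Vs_Bellman.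
Qed.

End Policy.

Lemma stochastic_recursion_bound (M : 'M[R]_nS) (d : 'I_nS -> R) (B : R) :
  (forall s s', 0 <= M s s') -> (forall s, \sum_s' M s s' = 1) ->
  (forall s, d s <= B + gamma * \sum_s' M s s' * d s') ->
  forall s, d s <= B / (1 - gamma).
Proof.
move=> M_ge0 M_sum1 d_rec s; have [g0 g1] := andP gamma_01.
pose smax := [arg max_(i > s) d i]%O.
have d_le_max s' : d s' <= d smax.
  by rewrite /smax; case: arg_maxP => // i _; apply.
have : d smax <= B + gamma * d smax.
  apply: (le_trans (d_rec smax)); rewrite lerD2l ler_wpM2l //.
  rewrite -[leRHS]mul1r -(M_sum1 smax) mulr_suml.
  by apply: ler_sum => s' _; rewrite ler_wpM2l.
move=> dmax_le; apply: (le_trans (d_le_max s)).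
by rewrite ler_pdivlMr ?subr_gt0 //; lra.
Qed.

Lemma Vs_sub_le { pi pi' : 'M[R]_(nS, nA) } { B : R } :
  is_policy pi -> is_policy pi' ->
  (forall s, \sum_a pi' s a * Qfun P C gamma pi s a - Vs P C gamma pi s <= B) ->
  forall s, Vs P C gamma pi' s - Vs P C gamma pi s <= B / (1 - gamma).
Proof.
move=> pi_policy pi'_policy advantage_le.
apply: stochastic_recursion_bound (Ppi_ge0 pi'_policy) (Ppi_sum1 pi'_policy) _ => s.
have := advantage_le s.
under eq_bigr do rewrite mxE; rewrite sum_policy_Bellman.
rewrite [Vs _ _ _ pi' s](Vs_Bellman pi'_policy).
under [X in _ -> _ <= _ + gamma * X]eq_bigr do rewrite mulrBr.
rewrite sumrB; lra.
Qed.

Lemma Vrho_sub_le { pi pi' : 'M[R]_(nS, nA) } { B : R } { rho : 'rV[R]_nS } :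
  simplex rho -> (forall s, Vs P C gamma pi' s - Vs P C gamma pi s <= B) ->
  Vrho P C gamma pi' rho - Vrho P C gamma pi rho <= B.
Proof.
move=> [rho_ge0 rho_sum1] Vs_le; rewrite /Vrho -sumrB -[leRHS]mul1r -rho_sum1 mulr_suml.
by apply: ler_sum => s _; rewrite -mulrBr ler_wpM2l.
Qed.

Lemma advantage_le_of_approx { pi pi' Qh : 'M[R]_(nS, nA) } { tau : R } { s : 'I_nS } :
  is_policy pi -> is_policy pi' ->
  (forall a, `|Qh s a - Qfun P C gamma pi s a| <= tau) ->
  dotr (row s Qh) (row s pi' - row s pi) <= 0 ->
  \sum_a pi' s a * Qfun P C gamma pi s a - Vs P C gamma pi s <= 2 * tau.
Proof.
move=> pi_policy pi'_policy Qh_err descent.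
rewrite (Vs_Qfun pi_policy) -sumrB; set Qf := Qfun P C gamma pi.
have -> : \sum_a (pi' s a * Qf s a - pi s a * Qf s a) =
    dotr (row s Qh) (row s pi' - row s pi) + \sum_a (pi' s a - pi s a) * (Qf s a - Qh s a).
  by rewrite /dotr -big_split; apply: eq_bigr => a _ /=; rewrite !mxE; ring.
have err_le : \sum_a (pi' s a - pi s a) * (Qf s a - Qh s a) <= \sum_a (pi' s a + pi s a) * tau.
  apply: ler_sum => a _; apply: le_trans (ler_norm _) _; rewrite normrM.
  apply: ler_pM => //; last by rewrite distrC.
  by rewrite (le_trans (ler_normB _ _)) // !ger0_norm ?policy_ge0.
move: err_le; rewrite -mulr_suml big_split /= (policy_sum1 pi_policy) (policy_sum1 pi'_policy).
lra.
Qed.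

End PolicyEvaluation.

Section NormBounds.
Context { R : realType } { n : nat }.
Implicit Types (u v z : 'rV[R]_n).

Lemma mulr_le_norm (s a : R) : 0 <= s -> s <= 1 -> s * a <= `|a|.
Proof.
move=> s0 s1; apply: le_trans (ler_norm _) _.
by rewrite normrM ger0_norm // ler_piMl.
Qed.

(* On [R], [k *: a] is [k * a] only up to conversion; stating it with [*] lets
   [lra] treat both sides alike. *)
Lemma scalar_linearZ (L : {linear 'rV[R]_n -> R}) (k : R) v : L (k *: v) = k * L v.
Proof. exact: linearZ. Qed.

Lemma scalar_linearDZ (L : {linear 'rV[R]_n -> R}) u (k : R) v :
  L (u + k *: v) = L u + k * L v.
Proof. by rewrite linearD scalar_linearZ. Qed.

Lemma scalar_linear_segment (L : {linear 'rV[R]_n -> R}) u v (t : R) :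
  L (t *: u + (1 - t) *: v) = t * L u + (1 - t) * L v.
Proof. by rewrite linearD !scalar_linearZ. Qed.

Lemma linear_bounded_on_ball (L : {linear 'rV[R]_n -> R}) (r K : R) :
  0 < r -> (forall v, `|v| < r -> L v <= K) ->
  forall u, `|u| <= 1 -> `|L u| <= 2 * `|K| / r.
Proof.
move=> r0 L_le u u_le1; have r2 : 0 < r / 2 by rewrite divr_gt0.
have small : `|(r / 2) *: u| < r.
  rewrite normrZ gtr0_norm // (le_lt_trans (ler_wpM2l (ltW r2) u_le1)) //; lra.
have := L_le _ small; have := L_le (- ((r / 2) *: u)); rewrite normrN => /(_ small).
rewrite linearN scalar_linearZ => Lu_ge Lu_le.
have HK : K <= `|K| := ler_norm K.
have bound_scaled : r / 2 * (2 * `|K| / r) = `|K| by field; rewrite gt_eqF.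
move: Lu_ge Lu_le bound_scaled r2; set l := L u; set B := 2 * `|K| / r; set r' := r / 2.
by move=> *; rewrite ler_norml; apply/andP; split; nra.
Qed.

Lemma norm_grad_le (g : 'rV[R]_n -> R) z (B : R) :
  0 <= B -> (forall u, `|u| <= 1 -> `|'d g z u| <= B) -> `|grad g z| <= B.
Proof.
move=> B0 dg_le; rewrite [leLHS]/Num.norm /= mx_normrE.
apply: bigmax_le => // ij _; rewrite mxE; apply: dg_le.
rewrite [leLHS]/Num.norm /= mx_normrE; apply: bigmax_le => // ij' _.
by rewrite mxE; case: (_ && _); rewrite ?normr1 ?normr0.
Qed.

End NormBounds.

Section ConvexExtendedValued.
Context { R : realType } { n : nat } { h : 'rV[R]_n -> \bar R }.
Implicit Types (x y z w u v : 'rV[R]_n) (t c : R).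
Hypothesis h_gtNy : forall x, (-oo < h x)%E.
Hypothesis h_convex : convex_fun h.
Local Notation f := (hfin h).
Local Notation D := (edom h).

Lemma edom_hfinE x : D x -> h x = (f x)%:E.
Proof. by move=> Dx; rewrite /hfin fineK // fin_real // h_gtNy Dx. Qed.

Lemma convex_hfin x y t : D x -> D y -> 0 <= t <= 1 ->
  D (t *: x + (1 - t) *: y) /\ f (t *: x + (1 - t) *: y) <= t * f x + (1 - t) * f y.
Proof.
move=> Dx Dy t01; have := @h_convex x y t t01.
rewrite /= (edom_hfinE x Dx) (edom_hfinE y Dy) -!EFinM -EFinD => hz_le.
have Dz : D (t *: x + (1 - t) *: y) := le_lt_trans hz_le (ltry _).
by split => //; rewrite -lee_fin -edom_hfinE.
Qed.

Lemma diff_hfin_le x w : differentiable f x -> D x -> D w ->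
  'd f x (w - x) <= f w - f x.
Proof.
move=> dfx Dx Dw; set v := w - x.
rewrite -deriveE //.
have quotient_cvg : (fun t : R => t^-1 *: ((f \o shift x) (t *: v) - f x)) @ 0^' --> 'D_v f x.
  exact: diff_derivable.
have {}quotient_cvg :
    (fun t : R => t^-1 *: ((f \o shift x) (t *: v) - f x)) @ 0^'+ --> 'D_v f x.
  by apply: cvg_trans quotient_cvg; apply: cvg_app; apply: within_subset => // t /lt0r_neq0.
apply: (cvgr_to_le quotient_cvg); near=> t.
have t0 : 0 < t by near: t; exact: nbhs_right_gt.
have t1 : t <= 1 by near: t; exact: nbhs_right_ltW ltr01.
have [_ fz_le] := convex_hfin w x t Dw Dx (introT andP (conj (ltW t0) t1)).
rewrite /=; have -> : t *: v + x = t *: w + (1 - t) *: x.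
  by rewrite /v scalerBr scalerBl scale1r addrA addrAC.
change (t^-1 * (f (t *: w + (1 - t) *: x) - f x) <= f w - f x).
by rewrite mulrC ler_pdivrMr //; nra.
Unshelve. all: by end_near. Qed.

Lemma interior_edom_segment x y t : D x -> interior D y -> 0 < t <= 1 ->
  interior D (t *: y + (1 - t) *: x).
Proof.
move=> Dx /nbhs_ballP [e e0 ball_y] /andP [t0 t1].
apply/nbhs_ballP; exists (t * e); first exact: mulr_gt0.
move=> u; rewrite -ball_normE /= => near_u.
set z := t *: y + (1 - t) *: x in near_u *.
pose y' := y + t^-1 *: (u - z).
have Dy' : D y'.
  apply: ball_y; rewrite -ball_normE /= /y' opprD addrA subrr sub0r normrN normrZ.
  by rewrite ger0_norm ?invr_ge0 ?(ltW t0) // -normrN opprB mulrC ltr_pdivrMr // mulrC.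
have -> : u = t *: y' + (1 - t) *: x.
  by rewrite /y' scalerDr scalerA mulfV ?gt_eqF // scale1r addrAC -/z addrC subrK.
by have [] := convex_hfin y' x t Dy' Dx (introT andP (conj (ltW t0) t1)).
Qed.

Hypothesis hfin_differentiable : forall x, interior D x -> differentiable f x.
Hypothesis grad_hfin_blowup : forall (u : nat -> 'rV[R]_n) (x : 'rV[R]_n),
  (forall k, interior D (u k)) -> u @ \oo --> x ->
  closure (interior D) x -> ~ interior D x ->
  (fun k => `|grad f (u k)|) @ \oo --> +oo.

Lemma grad_hfin_unbounded_segment x y : D x -> interior D y -> ~ interior D x ->
  forall B, exists2 t, 0 < t <= 1 & B < `|grad f (t *: y + (1 - t) *: x)|.
Proof.
move=> Dx Iy Nx B.
pose u k := harmonic k *: y + (1 - harmonic k) *: x.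
have harmonic_01 k : 0 < (harmonic k : R) <= 1.
  by rewrite harmonic_gt0 /= invf_le1 ?ler1n ?ltr0n.
have Iu k : interior D (u k) by apply: interior_edom_segment.
have u_cvg : u @ \oo --> x.
  have -> : u = fun k => harmonic k *: (y - x) + x.
    by apply/funext => k; rewrite /u scalerBr scalerBl scale1r addrA addrAC.
  have := cvgD (cvgZ cvg_harmonic (cvg_cst (y - x))) (cvg_cst x).
  by rewrite scale0r add0r; apply.
have x_cl : closure (interior D) x.
  move=> A /u_cvg A_near; have [k Ak] := @filter_ex _ \oo _ (u @^-1` A) A_near.
  by exists (u k).
have /cvgryPgt/(_ B)/filter_ex [k Bk] := grad_hfin_blowup u x Iu u_cvg x_cl Nx.
by exists (harmonic k).
Qed.

Lemma hfin_segment_ge x y t : D x -> interior D y -> 0 < t <= 1 ->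
  f y - `|'d f y (y - x)| <= f (t *: y + (1 - t) *: x).
Proof.
move=> Dx Iy t01; have [t0 t1] := andP t01; set z := t *: y + (1 - t) *: x.
have Dz : D z := nbhs_singleton (interior_edom_segment x y t Dx Iy t01).
have := diff_hfin_le y z (hfin_differentiable y Iy) (nbhs_singleton Iy) Dz.
have -> : z - y = (t - 1) *: (y - x).
  by apply/matrixP => i j; rewrite !mxE; ring.
rewrite scalar_linearZ => dfy_le.
have : (1 - t) * 'd f y (y - x) <= `|'d f y (y - x)| by apply: mulr_le_norm; lra.
lra.
Qed.

Lemma diff_hfin_segment_ge x y t c : D x -> interior D y -> 0 < t <= 1 ->
  f x <= f (t *: y + (1 - t) *: x) + t * c ->
  - c <= 'd f (t *: y + (1 - t) *: x) (y - x).
Proof.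
move=> Dx Iy t01 fx_le; have [t0 _] := andP t01; set z := t *: y + (1 - t) *: x.
have Iz : interior D z := interior_edom_segment x y t Dx Iy t01.
have := diff_hfin_le z x (hfin_differentiable z Iz) (nbhs_singleton Iz) Dx.
have -> : x - z = (- t) *: (y - x).
  by apply/matrixP => i j; rewrite !mxE; ring.
rewrite scalar_linearZ => dfz_le.
by rewrite -(ler_pM2l t0); move: dfz_le fx_le; rewrite -/z; lra.
Qed.

(* Convexity bounds ['d f z v] by [f (y + v) - f z] minus the slope of [f] at [z]
   towards [y]: the first term is bounded because [f] is continuous at [y], the other
   two by the two preceding lemmas. *)
Lemma diff_hfin_segment_bounded x y c : D x -> interior D y ->
  (forall t, 0 < t <= 1 -> f x <= f (t *: y + (1 - t) *: x) + t * c) ->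
  exists2 r, 0 < r & exists K, forall t, 0 < t <= 1 ->
    forall v, `|v| < r -> 'd f (t *: y + (1 - t) *: x) v <= K.
Proof.
move=> Dx Iy fx_le.
have f_cont := differentiable_continuous (hfin_differentiable y Iy).
have f_near_y : \forall w \near y, D w /\ f w < f y + 1.
  near=> w; split; first by near: w; exact: Iy.
  by near: w; apply: (@cvgr_lt _ _ _ _ f (f y) f_cont); rewrite ltrDl.
have [r r0 ball_r] := (nbhs_ballP _ _).1 f_near_y.
exists r => //; exists (f y + 1 - (f y - `|'d f y (y - x)|) + `|c|).
move=> t t01 v v_lt; have [t0 t1] := andP t01; set z := t *: y + (1 - t) *: x.
have Iz : interior D z := interior_edom_segment x y t Dx Iy t01.
have [Dw fw_lt] : D (y + v) /\ f (y + v) < f y + 1.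
  by apply: ball_r; rewrite -ball_normE /= opprD addrA subrr sub0r normrN.
have := diff_hfin_le z (y + v) (hfin_differentiable z Iz) (nbhs_singleton Iz) Dw.
have -> : y + v - z = v + (1 - t) *: (y - x).
  by apply/matrixP => i j; rewrite !mxE; ring.
move=> dfz_le.
(* Rewriting with this equation in [dfz_le] sends unification of the [diff]
   terms into a very long search, hence it is handed to [lra] instead. *)
have dfz_split : 'd f z (v + (1 - t) *: (y - x)) = 'd f z v + (1 - t) * 'd f z (y - x).
  exact: scalar_linearDZ.
have fz_ge : f y - `|'d f y (y - x)| <= f z := hfin_segment_ge x y t Dx Iy t01.
have d_ge : - c <= 'd f z (y - x) :=
  diff_hfin_segment_ge x y t c Dx Iy t01 (fx_le t t01).
have : (1 - t) * (- c) <= (1 - t) * 'd f z (y - x) by apply: ler_wpM2l; rewrite ?subr_ge0.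
have : (1 - t) * c <= `|c| by apply: mulr_le_norm; lra.
lra.
Unshelve. all: by end_near. Qed.

Lemma interior_edom_of_segment_bound x y c : D x -> interior D y ->
  (forall t, 0 < t <= 1 -> f x <= f (t *: y + (1 - t) *: x) + t * c) ->
  interior D x.
Proof.
move=> Dx Iy fx_le; apply: contrapT => Nx.
have [r r0 [K dfz_le]] := diff_hfin_segment_bounded x y c Dx Iy fx_le.
have [t t01] := grad_hfin_unbounded_segment x y Dx Iy Nx (2 * `|K| / r).
apply/negP; rewrite -leNgt; apply: norm_grad_le.
  by apply: divr_ge0; [rewrite mulr_ge0 | exact: ltW].
exact: linear_bounded_on_ball r0 (dfz_le t t01).
Qed.

End ConvexExtendedValued.

Section Simplex.
Context { R : realType } { n : nat }.
Implicit Types (p q x y Q : 'rV[R]_n) (t : R).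

Lemma dotrBr Q y x : dotr Q (y - x) = dotr Q y - dotr Q x.
Proof. by rewrite /dotr -sumrB; apply: eq_bigr => i _; rewrite !mxE mulrBr. Qed.

Lemma dotr_segment Q y x t :
  dotr Q (t *: y + (1 - t) *: x) = t * dotr Q y + (1 - t) * dotr Q x.
Proof.
by rewrite /dotr !mulr_sumr -big_split; apply: eq_bigr => i _ /=; rewrite !mxE; ring.
Qed.

Lemma simplex_segment y x t : simplex y -> simplex x -> 0 <= t <= 1 ->
  simplex (t *: y + (1 - t) *: x).
Proof.
move=> [y_ge0 y_sum1] [x_ge0 x_sum1] /andP [t0 t1]; split => [i|].
  by rewrite !mxE addr_ge0 // mulr_ge0 ?subr_ge0.
under eq_bigr do rewrite !mxE.
by rewrite big_split /= -!mulr_sumr y_sum1 x_sum1; ring.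
Qed.

Lemma simplex_dim_gt0 p : simplex p -> (0 < n)%N.
Proof.
case: n p => [|m] p [_] //; rewrite big_ord0 => /eqP.
by rewrite eq_sym oner_eq0.
Qed.

Lemma rint_simplex_uniform : (0 < n)%N -> rint_simplex (const_mx n%:R^-1 : 'rV[R]_n).
Proof.
move=> n_gt0; split => [i|]; first by rewrite mxE invr_gt0 ltr0n.
under eq_bigr do rewrite mxE.
by rewrite sumr_const card_ord -[_ *+ n]mulr_natl mulfV // pnatr_eq0 -lt0n.
Qed.

End Simplex.

Section MirrorStep.
Context { R : realType } { n : nat } { h : 'rV[R]_n -> \bar R }.
Implicit Types (p q x y : 'rV[R]_n) (t : R).
Hypothesis h_gtNy : forall x, (-oo < h x)%E.
Hypothesis h_convex : convex_fun h.
Local Notation f := (hfin h).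
Local Notation D := (edom h).

Lemma bregmanxx p : bregman h p p = 0.
Proof. by rewrite /bregman !subrr linear0 subr0. Qed.

Lemma bregman_ge0 p q : differentiable f q -> D q -> D p -> 0 <= bregman h p q.
Proof. by move=> dfq Dq Dp; rewrite /bregman subr_ge0 diff_hfin_le. Qed.

Hypothesis h_smooth : essentially_smooth h.
Let hfin_differentiable : forall x, interior D x -> differentiable f x := h_smooth.2.1.
Hypothesis rint_simplex_interior : forall p, rint_simplex p -> interior D p.
Hypothesis simplex_edom : forall p, simplex p -> D p.

Context { eta : R } { Q q x : 'rV[R]_n }.
Hypothesis x_simplex : simplex x.
Hypothesis x_argmin : forall p, simplex p ->
  eta * dotr Q x + bregman h x q <= eta * dotr Q p + bregman h p q.

Lemma mirror_step_descent : 0 < eta -> simplex q -> interior D q -> dotr Q (x - q) <= 0.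
Proof.
move=> eta_gt0 q_simplex Iq.
have := x_argmin q q_simplex; rewrite bregmanxx addr0 dotrBr.
have := bregman_ge0 x q (hfin_differentiable q Iq) (nbhs_singleton Iq)
  (simplex_edom x x_simplex).
rewrite -(pmulr_rle0 _ eta_gt0) mulrBr; lra.
Qed.

Lemma mirror_step_interior : simplex q -> interior D q -> interior D x.
Proof.
move=> q_simplex Iq; have Dx := simplex_edom x x_simplex.
set y : 'rV[R]_n := const_mx n%:R^-1.
have y_rint : rint_simplex y := rint_simplex_uniform (simplex_dim_gt0 x x_simplex).
have y_simplex : simplex y by case: y_rint => y_gt0; split => // i; exact: ltW.
(* Optimality of [x] against [t *: y + (1 - t) *: x], once both linear terms are
   expanded, is the hypothesis of [interior_edom_of_segment_bound] for this [c]. *)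
pose c := (eta * dotr Q y - 'd f q (y - q)) - (eta * dotr Q x - 'd f q (x - q)).
apply: (interior_edom_of_segment_bound h_gtNy h_convex hfin_differentiable h_smooth.2.2
  x y c Dx (rint_simplex_interior y y_rint)).
move=> t /andP [t0 t1].
have p_simplex := simplex_segment y x t y_simplex x_simplex (introT andP (conj (ltW t0) t1)).
have d_split : 'd f q (t *: y + (1 - t) *: x - q) =
    t * 'd f q (y - q) + (1 - t) * 'd f q (x - q).
  have -> : t *: y + (1 - t) *: x - q = t *: (y - q) + (1 - t) *: (x - q).
    by apply/matrixP => i j; rewrite !mxE; ring.
  exact: scalar_linear_segment.
have := x_argmin _ p_simplex; rewrite /bregman dotr_segment /c.
move: d_split; nra.
Qed.

End MirrorStep.

Theorem lemma12 (R : realType) (nS nA : nat)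
  (P : 'I_nS -> 'I_nA -> 'I_nS -> R) (C : 'I_nS -> 'I_nA -> R) (gamma : R)
  (h : 'rV[R]_nA -> \bar R)
  (pi : nat -> 'M[R]_(nS, nA)) (Qhat : nat -> 'M[R]_(nS, nA))
  (eta : nat -> R) (tau : R) :
  is_transition P ->
  (forall s a, 0 <= C s a <= 1) ->
  0 <= gamma < 1 ->
  legendre h ->
  (forall p : 'rV[R]_nA, simplex p -> edom h p) ->
  (forall p : 'rV[R]_nA, rint_simplex p -> interior (edom h) p) ->
  is_rint_policy (pi 0%N) ->
  (forall k, 0 < eta k) ->
  (forall k s a, `|Qhat k s a - Qfun P C gamma (pi k) s a| <= tau) ->
  (forall k s,
     simplex (row s (pi k.+1)) /\
     (forall p : 'rV[R]_nA, simplex p ->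
        eta k * dotr (row s (Qhat k)) (row s (pi k.+1))
          + bregman h (row s (pi k.+1)) (row s (pi k))
        <= eta k * dotr (row s (Qhat k)) p + bregman h p (row s (pi k)))) ->
  forall k,
    (forall s, dotr (row s (Qhat k)) (row s (pi k.+1) - row s (pi k)) <= 0) /\
    (forall rho : 'rV[R]_nS, simplex rho ->
       Vrho P C gamma (pi k.+1) rho - Vrho P C gamma (pi k) rho
         <= 2 / (1 - gamma) * tau).
Proof.
move=> P_transition C_01 gamma_01 [[_ h_gtNy] h_convex _ h_smooth _] simplex_edom
  rint_interior pi0_rint eta_gt0 Qhat_err mirror_step.
have iterate_simplex_interior k s :
    simplex (row s (pi k)) /\ interior (edom h) (row s (pi k)).
  elim: k s => [|k IH] s.
    have [pi0_gt0 pi0_sum1] := pi0_rint s.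
    by split; [split => // a; exact: ltW | exact: rint_interior].
  have [x_simplex x_argmin] := mirror_step k s; have [q_simplex Iq] := IH s.
  split; first exact: x_simplex.
  exact: (mirror_step_interior h_gtNy h_convex h_smooth rint_interior simplex_edom
    x_simplex x_argmin q_simplex Iq).
have iterate_policy k : is_policy (pi k) by move=> s; case: (iterate_simplex_interior k s).
move=> k.
have descent s : dotr (row s (Qhat k)) (row s (pi k.+1) - row s (pi k)) <= 0.
  have [q_simplex Iq] := iterate_simplex_interior k s.
  have [x_simplex x_argmin] := mirror_step k s.
  exact: (mirror_step_descent h_gtNy h_convex h_smooth simplex_edom x_simplex x_argmin
    (eta_gt0 k) q_simplex Iq).
split => // rho rho_simplex; apply: Vrho_sub_le rho_simplex _ => s.
rewrite mulrAC.
apply: (Vs_sub_le P_transition C_01 gamma_01 (iterate_policy k) (iterate_policy k.+1)) => s'.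
exact: (advantage_le_of_approx P_transition C_01 gamma_01 (iterate_policy k)
  (iterate_policy k.+1) (Qhat_err k s') (descent s')).
Qed.
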